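(* Let $n>3$ and $k,m\geq2$ with $k+m=n+1$. Write $\mathbb{R}^{n+1}\equiv\mathbb{C}\times\mathbb{R}^{k-2}\times\mathbb{C}\times\mathbb{R}^{m-2}$ with points $(z_1,x_1,z_2,x_2)$, and let $O(k)\times O(m)$ act on $\mathbb{R}^{n+1}$ with $O(k)$ acting on the first factor $\mathbb{C}\times\mathbb{R}^{k-2}\equiv\mathbb{R}^k$ and $O(m)$ on the second factor $\mathbb{C}\times\mathbb{R}^{m-2}\equiv\mathbb{R}^m$. If $u:\mathbb{S}^n\to\mathbb{R}$ is $[O(k)\times O(m)]$-invariant and $$u(z_1,x_1,z_2,x_2)=-u(-\bar z_2,x_1,\bar z_1,x_2)\qquad\text{for all }(z_1,x_1,z_2,x_2),$$ then $u\equiv0$.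
   Context: $\mathbb{S}^n$ is the unit sphere in $\mathbb{R}^{n+1}$; $u$ being $[O(k)\times O(m)]$-invariant means $u(\gamma y)=u(y)$ for all $\gamma\in O(k)\times O(m)$ and $y\in\mathbb{S}^n$. *)

From HB Require Import structures.
From mathcomp Require Import all_boot all_order all_algebra.
From mathcomp Require Import reals.
Set Implicit Arguments. Unset Strict Implicit. Unset Printing Implicit Defensive.
Import Order.TTheory GRing.Theory Num.Theory.
Local Open Scope ring_scope.

Definition on_sphere (R : realType) N (y : 'rV[R]_N) : Prop :=
  \sum_(i < N) y 0 i ^+ 2 = 1.

Definition orthogonal_mx (R : realType) p (A : 'M[R]_p) : Prop :=
  A *m A^T = 1%:M.

Definition OkOm_act (R : realType) k m (A : 'M[R]_k) (B : 'M[R]_m)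
  (y : 'rV[R]_(k + m)) : 'rV[R]_(k + m) :=
  row_mx (lsubmx y *m A) (rsubmx y *m B).

Definition OkOm_invariant (R : realType) k m (u : 'rV[R]_(k + m) -> R) : Prop :=
  forall (A : 'M[R]_k) (B : 'M[R]_m) (y : 'rV[R]_(k + m)),
    orthogonal_mx A -> orthogonal_mx B -> on_sphere y ->
    u (OkOm_act A B y) = u y.

(* j-th coordinate (0-based) of y, or 0 if out of range. *)
Definition coord_of (R : realType) N (y : 'rV[R]_N) (j : nat) : R :=
  if insub j is Some i then y 0 i else 0.

(* Coordinates of R^(k+m) = C x R^(k-2) x C x R^(m-2):
   z1 = y_0 + i y_1, x1 = (y_2..y_(k-1)), z2 = y_k + i y_(k+1),
   x2 = (y_(k+2)..y_(k+m-1)).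
   sigma (z1,x1,z2,x2) = (-conj z2, x1, conj z1, x2), i.e.
   -conj z2 = -y_k + i y_(k+1)  and  conj z1 = y_0 - i y_1. *)
Definition sigma_map (R : realType) k m (y : 'rV[R]_(k + m)) : 'rV[R]_(k + m) :=
  \row_(i < k + m)
    (if val i == 0%N then - coord_of y k
     else if val i == 1%N then coord_of y k.+1
     else if val i == k then coord_of y 0
     else if val i == k.+1 then - coord_of y 1
     else y 0 i).

From mathcomp Require Import all_boot all_order all_algebra.
From mathcomp Require Import reals.
From mathcomp Require Import ring lra zify.
Import Order.TTheory GRing.Theory Num.Theory.
Set Implicit Arguments. Unset Strict Implicit. Unset Printing Implicit Defensive.
Local Open Scope ring_scope.

(* An [O(k) x O(m)]-invariant [u] on the sphere only depends on the squared
   length [t] of the first block, say [u = f(t)].  The map sigma swaps the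
   complex coordinates [z1] and [z2] (up to conjugation and sign), so on the
   points with [x1 = 0, |z1|^2 = t, z2 = 0] (available when [m >= 3]) the
   antisymmetry reads [f(t) = - f(0)], while on the points with [z1 = 0,
   |x1|^2 = t, x2 = 0] (available when [k >= 3]) it reads [f(t) = - f(1)].
   Since [k + m >= 5], one of the two applies, and taking [t = 0], resp.
   [t = 1], forces the constant, hence [f], to vanish. *)

Section RowVectors.
Variable R : realType.

Definition sqnorm p (x : 'rV[R]_p) : R := \sum_(j < p) x 0 j ^+ 2.

Definition vdot p (x y : 'rV[R]_p) : R := (x *m y^T) 0 0.

Lemma vdotC p (x y : 'rV[R]_p) : vdot x y = vdot y x.
Proof.
have -> : vdot x y = (x *m y^T)^T 0 0 by rewrite mxE.
by rewrite trmx_mul trmxK.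
Qed.

Lemma vdotBr p (x y z : 'rV[R]_p) : vdot x (y - z) = vdot x y - vdot x z.
Proof. by rewrite /vdot raddfB /= mulmxBr !mxE. Qed.

Lemma vdotBl p (x y z : 'rV[R]_p) : vdot (y - z) x = vdot y x - vdot z x.
Proof. by rewrite /vdot mulmxBl !mxE. Qed.

Lemma vdotxx p (x : 'rV[R]_p) : vdot x x = sqnorm x.
Proof. by rewrite /vdot mxE; apply: eq_bigr => j _; rewrite !mxE expr2. Qed.

Lemma sqnorm_eq0 p (x : 'rV[R]_p) : (sqnorm x == 0) = (x == 0).
Proof.
rewrite psumr_eq0 => [|j _]; last exact: sqr_ge0.
apply/allP/eqP => [x0|-> j _]; last first.
  by rewrite implybE mxE expr0n eqxx orbT.
by apply/rowP => j; apply/eqP; rewrite mxE -sqrf_eq0 (implyP (x0 j _)) ?mem_index_enum.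
Qed.

Lemma sqnorm_split k m (y : 'rV[R]_(k + m)) :
  sqnorm y = sqnorm (lsubmx y) + sqnorm (rsubmx y).
Proof.
by rewrite /sqnorm big_split_ord; congr (_ + _); apply: eq_bigr => j _; rewrite mxE.
Qed.

(* A Householder reflection across the hyperplane orthogonal to [v - w]. *)
Lemma orthogonal_mx_map p (v w : 'rV[R]_p) : sqnorm v = sqnorm w ->
  exists A : 'M[R]_p, orthogonal_mx A /\ v *m A = w.
Proof.
move=> vw.
have [->|neq_vw] := eqVneq v w.
  by exists 1%:M; rewrite mulmx1 /orthogonal_mx trmx1 mulmx1.
set d := v - w; set c := vdot d d; set D := d^T *m d.
have c_neq0 : c != 0 by rewrite /c vdotxx sqnorm_eq0 subr_eq0.
have c_def : c = 2 * vdot v d.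
  by rewrite /c /d !vdotBr !vdotBl (vdotC w v) !vdotxx vw; ring.
have DT : D^T = D by rewrite /D trmx_mul trmxK.
have DD : D *m D = c *: D.
  by rewrite /D mulmxA -(mulmxA d^T) [d *m d^T]mx11_scalar mul_mx_scalar scalemxAl.
exists (1%:M - (2 / c) *: D); split.
  rewrite /orthogonal_mx [(_ - _)^T]linearB /= [(_ *: D)^T]linearZ /= DT trmx1.
  rewrite mulmxBl !mulmxBr !mul1mx !mulmx1 -!scalemxAl -!scalemxAr DD !scalerA.
  have -> : 2 / c * (2 / c) * c = 2 / c + 2 / c by field.
  by rewrite scalerDl opprB addrK subrK.
rewrite mulmxBr mulmx1 -scalemxAr /D mulmxA [v *m d^T]mx11_scalar mul_scalar_mx.
rewrite scalerA -/(vdot v d) c_def mulrAC divff ?mul1r ?scale1r; last first.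
  by move: c_neq0; rewrite c_def.
by rewrite /d opprB addrC subrK.
Qed.

Definition vec2 N (i1 i2 : nat) (x1 x2 : R) : 'rV[R]_N :=
  \row_(i < N) (if val i == i1 then x1 else if val i == i2 then x2 else 0).

Lemma sum_if_eq_ord N (c : nat) (x : R) :
  \sum_(i < N) (if val i == c then x else 0) = if (c < N)%N then x else 0.
Proof.
case: ltnP => [cN|Nc].
  rewrite (bigD1 (Ordinal cN)) //= eqxx big1 ?addr0 // => i /eqP neq_i.
  by case: eqP => // ic; case: neq_i; apply: val_inj.
by apply: big1 => i _; case: eqP => // ic; move: Nc; rewrite -ic leqNgt ltn_ord.
Qed.

Lemma vec2_sqr N i1 i2 x1 x2 (i : 'I_N) : i1 != i2 ->
  vec2 N i1 i2 x1 x2 0 i ^+ 2 =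
  (if val i == i1 then x1 ^+ 2 else 0) + (if val i == i2 then x2 ^+ 2 else 0).
Proof.
move=> neq12; rewrite mxE; case: eqP => [->|_]; first by rewrite (negbTE neq12) addr0.
by case: eqP => _; rewrite ?add0r // expr0n.
Qed.

Lemma sphere_vec2 N i1 i2 x1 x2 : i1 != i2 -> (i1 < N)%N -> (i2 < N)%N ->
  x1 ^+ 2 + x2 ^+ 2 = 1 -> on_sphere (vec2 N i1 i2 x1 x2).
Proof.
move=> neq12 i1N i2N circle; rewrite /on_sphere -circle.
under eq_bigr => i _ do rewrite vec2_sqr //.
by rewrite big_split /= !sum_if_eq_ord i1N i2N.
Qed.

Lemma sqnorm_lsubmx_vec2 k m i1 i2 x1 x2 : i1 != i2 ->
  sqnorm (lsubmx (vec2 (k + m) i1 i2 x1 x2)) =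
  (if (i1 < k)%N then x1 ^+ 2 else 0) + (if (i2 < k)%N then x2 ^+ 2 else 0).
Proof.
move=> neq12; rewrite /sqnorm.
under eq_bigr => i _ do rewrite mxE vec2_sqr //=.
by rewrite big_split /= !sum_if_eq_ord.
Qed.

Lemma coord_ofE N (y : 'rV[R]_N) j (jN : (j < N)%N) : coord_of y j = y 0 (Ordinal jN).
Proof. by rewrite /coord_of insubT. Qed.

Lemma sigma_map_vec2_z1 k m (a b : R) : (2 <= k)%N -> (3 <= m)%N ->
  sigma_map (vec2 (k + m) 0 k.+2 a b) = vec2 (k + m) k k.+2 a b.
Proof.
move=> k2 m3; apply/rowP => i.
have i0 : (0 < k + m)%N by lia.
have i1 : (1 < k + m)%N by lia.
have ik : (k < k + m)%N by lia.
have ik1 : (k.+1 < k + m)%N by lia.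
rewrite !mxE (coord_ofE _ ik) (coord_ofE _ ik1) (coord_ofE _ i0) (coord_ofE _ i1) !mxE /=.
by move: (val i) => t; repeat (case: eqP => ?); subst; rewrite ?oppr0 //; lia.
Qed.

Lemma sigma_map_vec2_x1 k m (a b : R) : (3 <= k)%N -> (2 <= m)%N ->
  sigma_map (vec2 (k + m) 2 k a b) = vec2 (k + m) 2 0 a (- b).
Proof.
move=> k3 m2; apply/rowP => i.
have i0 : (0 < k + m)%N by lia.
have i1 : (1 < k + m)%N by lia.
have ik : (k < k + m)%N by lia.
have ik1 : (k.+1 < k + m)%N by lia.
rewrite !mxE (coord_ofE _ ik) (coord_ofE _ ik1) (coord_ofE _ i0) (coord_ofE _ i1) !mxE /=.
by move: (val i) => t; repeat (case: eqP => ?); subst; rewrite ?oppr0 //; lia.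
Qed.

End RowVectors.

Section InvariantFunctions.
Variables (R : realType) (k m : nat) (u : 'rV[R]_(k + m) -> R).
Hypothesis u_inv : OkOm_invariant u.

Local Notation level y := (sqnorm (lsubmx y)).

Lemma OkOm_invariant_level (y y' : 'rV[R]_(k + m)) :
  on_sphere y -> on_sphere y' -> level y = level y' -> u y = u y'.
Proof.
move=> yS y'S eq_l.
have eq_r : sqnorm (rsubmx y) = sqnorm (rsubmx y').
  apply: (addrI (level y)); rewrite -sqnorm_split eq_l -sqnorm_split.
  exact: etrans yS (esym y'S).
have [A [oA yA]] := orthogonal_mx_map eq_l.
have [B [oB yB]] := orthogonal_mx_map eq_r.
by rewrite -(u_inv oA oB yS) /OkOm_act yA yB hsubmxK.
Qed.

Lemma OkOm_invariant_vec2 i1 i2 (y : 'rV[R]_(k + m)) :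
  (i1 < k)%N -> (k <= i2 < k + m)%N -> on_sphere y ->
  exists a b, a ^+ 2 + b ^+ 2 = 1 /\ u y = u (vec2 (k + m) i1 i2 a b).
Proof.
move=> i1k /andP[ki2 i2km] yS.
have l_ge0 : 0 <= level y by apply: sumr_ge0 => j _; apply: sqr_ge0.
have r_ge0 : 0 <= sqnorm (rsubmx y) by apply: sumr_ge0 => j _; apply: sqr_ge0.
have neq12 : i1 != i2 by apply/eqP; lia.
have circle : Num.sqrt (level y) ^+ 2 + Num.sqrt (sqnorm (rsubmx y)) ^+ 2 = 1.
  by rewrite !sqr_sqrtr // -sqnorm_split.
exists (Num.sqrt (level y)), (Num.sqrt (sqnorm (rsubmx y))); split => //.
apply: OkOm_invariant_level => //; first by apply: sphere_vec2 => //; lia.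
by rewrite sqnorm_lsubmx_vec2 // i1k ltnNge ki2 sqr_sqrtr ?addr0.
Qed.

Hypothesis u_anti : forall y, on_sphere y -> u y = - u (sigma_map y).

Lemma OkOm_anti_invariant_eq0 i1 i2 (z0 : 'rV[R]_(k + m)) :
  (i1 < k)%N -> (k <= i2 < k + m)%N -> on_sphere z0 ->
  (forall a b, a ^+ 2 + b ^+ 2 = 1 ->
     on_sphere (sigma_map (vec2 (k + m) i1 i2 a b)) /\
     level (sigma_map (vec2 (k + m) i1 i2 a b)) = level z0) ->
  forall y, on_sphere y -> u y = 0.
Proof.
move=> i1k i2km z0S sigma_level.
have neq12 : i1 != i2 by apply/eqP; case/andP: i2km => *; lia.
have u_opp_z0 y : on_sphere y -> u y = - u z0.
  move=> yS; have [a [b [ab ->]]] := OkOm_invariant_vec2 i1k i2km yS.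
  have vS : on_sphere (vec2 (k + m) i1 i2 a b).
    by case/andP: i2km => *; apply: sphere_vec2 => //; lia.
  have [sS sl] := sigma_level a b ab.
  by rewrite u_anti // (OkOm_invariant_level sS z0S sl).
have uz0 : u z0 = 0 by have := u_opp_z0 z0 z0S; lra.
by move=> y yS; rewrite u_opp_z0 // uz0 oppr0.
Qed.

End InvariantFunctions.

Theorem proposition4p2 (R : realType) (n k m : nat)
  (hn : (3 < n)%N) (hk : (2 <= k)%N) (hm : (2 <= m)%N) (hkm : (k + m = n + 1)%N)
  (u : 'rV[R]_(k + m) -> R)
  (hinv : OkOm_invariant u)
  (hanti : forall y : 'rV[R]_(k + m), on_sphere y -> u y = - u (sigma_map y)) :
  forall y : 'rV[R]_(k + m), on_sphere y -> u y = 0.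
Proof.
have [m3|m2] := leqP 3 m.
  apply: (OkOm_anti_invariant_eq0 hinv hanti (i1 := 0) (i2 := k.+2)
    (z0 := vec2 _ k k.+2 0 1)); try lia.
    by apply: sphere_vec2; rewrite ?expr0n ?add0r ?expr1n //; lia.
  move=> a b ab; rewrite sigma_map_vec2_z1 // !sqnorm_lsubmx_vec2; try lia.
  by rewrite ltnn !ifF; try lia; split => //; apply: sphere_vec2 => //; lia.
have k3 : (3 <= k)%N by lia.
apply: (OkOm_anti_invariant_eq0 hinv hanti (i1 := 2) (i2 := k)
  (z0 := vec2 _ 2 0 1 0)); try lia.
  by apply: sphere_vec2; rewrite ?expr0n ?addr0 ?expr1n //; lia.
move=> a b ab; rewrite sigma_map_vec2_x1 // !sqnorm_lsubmx_vec2; try lia.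
rewrite !ifT ?sqrrN ?expr1n ?expr0n ?addr0; try lia.
by split => //; apply: sphere_vec2; rewrite ?sqrrN //; lia.
Qed.
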